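(* Let $q>3$ be odd and $u=\begin{pmatrix}1&1\\0&1\end{pmatrix}$. Then the conjugacy class of $u$ in $\mathbf{GL}_2(q)$ is of type D.
   Context: Conjugacy classes are racks with $x\triangleright y=xyx^{-1}$. A subrack $Y$ is decomposable if $Y=R\sqcup S$ with nonempty subracks $R,S$, $Y\triangleright R=R$, $Y\triangleright S=S$. Type D: a decomposable subrack $R\sqcup S$ with $r\in R,s\in S$ and $r\triangleright(s\triangleright(r\triangleright s))\neq s$. *)

From HB Require Import structures.
From mathcomp Require Import all_boot all_order all_algebra all_fingroup.
Set Implicit Arguments. Unset Strict Implicit. Unset Printing Implicit Defensive.
Import GRing.Theory.

(* Rack structure of a group by conjugation: x |> y = x y x^-1.
   Note: mathcomp's  y ^ x  is x^-1 y x, so we write the product explicitly. *)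
Definition rk (gT : finGroupType) (x y : gT) : gT := (x * y * x^-1)%g.

Definition subrack (gT : finGroupType) (A : {set gT}) : Prop :=
  forall x y, x \in A -> y \in A -> rk x y \in A.

Definition rkset (gT : finGroupType) (x : gT) (A : {set gT}) : {set gT} :=
  [set rk x a | a in A].

(* A subrack Y of X is decomposable as R ⊔ S with R, S nonempty subracks
   and Y |> R = R, Y |> S = S. *)
Definition typeD (gT : finGroupType) (X : {set gT}) : Prop :=
  exists R S : {set gT},
    [/\ R \subset X, S \subset X, R != set0, S != set0 & [disjoint R & S]] /\
    [/\ subrack (R :|: S), subrack R, subrack S,
        (forall y, y \in R :|: S -> rkset y R = R) &
        (forall y, y \in R :|: S -> rkset y S = S)] /\
    exists r s, [/\ r \in R, s \in S & rk r (rk s (rk r s)) != s].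

Definition umx (F : finFieldType) : 'M[F]_2 :=
  \matrix_(i < 2, j < 2) (if (i <= j)%N then 1 else 0)%R.

Lemma umx_unit (F : finFieldType) : umx F \in unitmx.
Proof.
rewrite unitmxE (expand_det_row _ ord0) !big_ord_recr big_ord0 /=.
rewrite /cofactor !mxE /= !det_mx11 !mxE /=.
by rewrite !mulr0 addr0 add0r mul1r expr0 mulr1 unitr1.
Qed.


Definition uGL (F : finFieldType) : {'GL_2[F]} := FinRing.Unit (umx_unit F).

From mathcomp Require Import all_boot all_order all_algebra all_fingroup.
From mathcomp Require Import cyclic ring.
Set Implicit Arguments. Unset Strict Implicit. Unset Printing Implicit Defensive.
Import GRing.Theory.

(* The conjugacy classes of a subgroup H are subracks stable under the action
   of every element of H, so two distinct H-classes inside a rack X form a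
   decomposable subrack of X; moreover r |> (s |> (r |> s)) = s is just the
   braid relation r s r s = s r s r (typeD_of_classes).  We take H = SL_2(F),
   r = u and s = s_t = [[1, 0], [t, 1]], which is GL-conjugate to u for t != 0.
   To separate the SL-classes of u and s_t we attach to a matrix g the form
   Q_g(v) = det (v, (g - 1) v): conjugating g by h changes Q_g by the basis
   change h and the factor det h, so for h in SL_2(F) the set of values of Q_g
   is a class invariant.  Now Q_u(v) = -v_1^2, while Q_(s_t) takes the value t;
   and the (0,0) entries of u s_t u s_t and s_t u s_t u differ by t (t + 2).
   It remains to find t with t != 0, t != -2 and -t a nonsquare, which is
   possible since q is odd and q > 3 (exists_class_parameter). *)

Section ConjugacyClassRacks.
Local Open Scope group_scope.
Variable gT : finGroupType.
Implicit Types (H : {group gT}) (x y : gT).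

Lemma rkE x y : rk x y = y ^ x^-1.
Proof. by rewrite /rk conjgE invgK mulgA. Qed.

Lemma rkset_class H x y : y \in H -> rkset y (x ^: H) = x ^: H.
Proof.
move=> yH; rewrite -{2}(classGidr x (groupVr yH)).
by apply: eq_imset => a; rewrite rkE.
Qed.

Lemma rk_braid x y : (rk x (rk y (rk x y)) == y) = (x * y * x * y == y * x * y * x).
Proof.
apply/eqP/eqP => [E | E].
  by have := congr1 (fun z => z * x * y * x) E; rewrite /rk !mulgA !mulgKV.
by rewrite /rk !mulgA E !mulgK.
Qed.

Lemma typeD_of_classes H (X : {set gT}) x y :
    x \in H -> y \in H -> x ^: H \subset X -> y ^: H \subset X ->
    y \notin x ^: H -> x * y * x * y != y * x * y * x ->
  typeD X.
Proof.
move=> xH yH sxX syX ncl nbraid.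
have inH z : z \in x ^: H :|: y ^: H -> z \in H.
  by rewrite inE => /orP[] /imsetP[a aH ->]; rewrite groupJ.
have stable z a w : z \in H -> w \in a ^: H -> rk z w \in a ^: H.
  by move=> zH wa; rewrite -(rkset_class _ zH); apply: imset_f.
exists (x ^: H), (y ^: H); split; [|split].
- split=> //; [by apply/set0Pn; exists x; exact: class_refl
              | by apply/set0Pn; exists y; exact: class_refl |].
  rewrite -setI_eq0; apply/eqP/setP => z; rewrite !inE.
  apply/andP => -[zx]; rewrite class_sym => yz.
  by rewrite (class_trans yz zx) in ncl.
- split.
  + move=> z w /inH zH; rewrite !inE => /orP[] wA; apply/orP; [left|right];
      exact: stable.
  + by move=> z w zA; apply: stable; apply: inH; rewrite inE zA.
  + by move=> z w zA; apply: stable; apply: inH; rewrite inE zA orbT.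
  + by move=> z /inH zH; apply: rkset_class.
  + by move=> z /inH zH; apply: rkset_class.
exists x, y; split; [exact: class_refl | exact: class_refl | by rewrite rk_braid].
Qed.
End ConjugacyClassRacks.

Lemma exists_notin (T : finType) (s : seq T) : (size s < #|T|)%N -> exists x, x \notin s.
Proof.
move=> small_s; case: (pickP (fun x => x \notin s)) => [x x_notin | all_in].
  by exists x.
suff : (#|T| <= size s)%N by rewrite leqNgt small_s.
apply: leq_trans (card_size s); apply: subset_leq_card.
by apply/subsetP => x _; apply/negbFE/all_in.
Qed.

Section OddFiniteField.
Variable F : finFieldType.
Hypothesis Fodd : odd #|F|.
Hypothesis Fgt3 : (3 < #|F|)%N.
Local Open Scope ring_scope.

(* A finite field of odd order has characteristic different from 2: the
   additive order of 1 divides both #|F| and 2, and it is not 1. *)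
Lemma two_neq0 : (2%:R : F) != 0.
Proof.
apply/negP => /eqP two0.
have o1_dvd2 : (#[1%R : F]%g %| 2)%N.
  by rewrite order_dvdn FinRing.zmodXgE FinRing.zmod1gE two0.
have o1_neq1 : #[1%R : F]%g != 1%N by rewrite order_eq1 FinRing.zmod1gE oner_eq0.
have o1_eq2 : #[1%R : F]%g = 2%N by apply/prime_nt_dvdP.
by move: (order_dvdG (in_setT (1%R : F))); rewrite o1_eq2 cardsT dvdn2 Fodd.
Qed.

(* Squaring identifies 1 and -1 (which differ since 2 != 0), so it is not
   injective on F, hence not surjective: some element is a nonsquare. *)
Lemma exists_nonsquare : exists e : F, forall x, x ^+ 2 != e.
Proof.
have [e /forallP e_nonsq | all_sq] := pickP (fun e : F => [forall x, x ^+ 2 != e]).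
  by exists e.
suff /image_injP sq_inj : #|image (fun x : F => x ^+ 2) F| == #|F|.
  have /eqP := sq_inj 1 (-1) isT isT (esym (sqrrN 1)).
  by rewrite -subr_eq0 opprK -mulr2n (negPf two_neq0).
apply/eqP/eq_card => y; rewrite [RHS]inE.
move/negbT: (all_sq y); rewrite negb_forall => /existsP[x].
by rewrite negbK => /eqP <-; apply: codom_f.
Qed.

(* Take t = -e for a
   nonsquare e, unless e = 2, in which case take -t = 2c^2 with c^2 != 1. *)
Lemma exists_class_parameter :
  exists t : F, [/\ t != 0, t + 2%:R != 0 & forall x, x ^+ 2 != - t].
Proof.
have two0 := two_neq0.
have [e e_nonsq] := exists_nonsquare.
have e0 : e != 0 by apply: contraNneq (e_nonsq 0) => ->; rewrite expr0n.
have [e2 | e_neq2] := eqVneq e 2%:R; last first.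
  exists (- e); split=> [|| x]; last by rewrite opprK.
    by rewrite oppr_eq0.
  by rewrite addrC subr_eq0 eq_sym.
have [c] := @exists_notin F [:: 0; 1; -1] Fgt3.
rewrite !inE !negb_or => /and3P[c0 c1 cN1].
exists (- (2%:R * c ^+ 2)); split.
- by rewrite oppr_eq0 mulf_neq0 // expf_neq0.
- rewrite addrC subr_eq0 -{1}[2%:R]mulr1 (inj_eq (mulfI two0)) eq_sym.
  by rewrite -subr_eq0 subr_sqr_1 mulf_neq0 // ?subr_eq0 ?addr_eq0.
- move=> x; rewrite opprK -e2; apply: contra (e_nonsq (x / c)) => /eqP sq_x.
  by rewrite expr_div_n sq_x mulfK ?expf_neq0.
Qed.
End OddFiniteField.

Section TwoByTwo.
Variable R : comNzRingType.
Local Open Scope ring_scope.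

Definition mx22 (a b c d : R) : 'M[R]_2 :=
  \matrix_(i < 2, j < 2) if i == 0 then (if j == 0 then a else b)
                         else (if j == 0 then c else d).

Lemma ord2P (i : 'I_2) : i = 0 \/ i = 1.
Proof. by case: i => -[|[|//]] ?; [left | right]; apply: val_inj. Qed.

Lemma mx22E (A : 'M[R]_2) : A = mx22 (A 0 0) (A 0 1) (A 1 0) (A 1 1).
Proof. by apply/matrixP => i j; rewrite mxE; case: (ord2P i) => ->; case: (ord2P j) => ->. Qed.

Lemma mulmx2E n (A : 'M[R]_2) (B : 'M[R]_(2, n)) i j :
  (A *m B) i j = A i 0 * B 0 j + A i 1 * B 1 j.
Proof.
rewrite mxE big_ord_recl big_ord1.
by congr (A i _ * B _ j + A i _ * B _ j); apply: val_inj.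
Qed.

Lemma mul_mx22 a b c d a' b' c' d' :
  mx22 a b c d *m mx22 a' b' c' d' =
  mx22 (a * a' + b * c') (a * b' + b * d') (c * a' + d * c') (c * b' + d * d').
Proof. by rewrite [LHS]mx22E !mulmx2E !mxE. Qed.

Lemma det_mx22 a b c d : \det (mx22 a b c d) = a * d - b * c.
Proof.
rewrite (expand_det_row _ 0) !big_ord_recl big_ord0 /cofactor !det_mx11 !mxE /=.
by rewrite addr0 expr0 expr1 !mul1r mulN1r mulrN.
Qed.

Lemma det_row_mx2 (v w : 'cV[R]_2) :
  \det (row_mx v w) = v 0 0 * w 1 0 - w 0 0 * v 1 0.
Proof.
have split0 : split (0 : 'I_(1 + 1)) = inl 0.
  by apply: (can_inj unsplitK); rewrite splitK; apply: val_inj.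
have split1 : split (1 : 'I_(1 + 1)) = inr 0.
  by apply: (can_inj unsplitK); rewrite splitK; apply: val_inj.
by rewrite [row_mx v w]mx22E det_mx22 !mxE split0 split1.
Qed.

Definition qform (A : 'M[R]_2) (v : 'cV[R]_2) : R := \det (row_mx v ((A - 1) *m v)).

Lemma qform_conj (A k k' : 'M[R]_2) (v : 'cV[R]_2) :
  k' *m k = 1 -> qform (k *m A *m k') (k *m v) = \det k * qform A v.
Proof.
move=> k'k; have conj_v : (k *m A *m k' - 1) *m (k *m v) = k *m ((A - 1) *m v).
  by rewrite !mulmxBl -!mulmxA (mulmxA k') k'k !mul1mx mulmxBr.
by rewrite /qform conj_v -(mul_mx_row k) det_mulmx.
Qed.
End TwoByTwo.

Section SpecialLinearGroup.
Variable F : finFieldType.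
Local Notation GL2 := {'GL_2[F]}.
Local Open Scope ring_scope.

Definition SL_set : {set GL2} := [set g | \det (GLval g) == 1].

Lemma SL_group_set : group_set SL_set.
Proof.
apply/group_setP; split; first by rewrite inE det1.
by move=> x y; rewrite !inE GL_MxE det_mulmx => /eqP-> /eqP->; rewrite mulr1.
Qed.

Canonical SL := Group SL_group_set.

Definition represents (t : F) (g : GL2) : Prop := exists v, qform (GLval g) v = t.

Lemma represents_conj t g h : h \in SL -> represents t g -> represents t (g ^ h)%g.
Proof.
move=> /groupVr; rewrite inE => /eqP detV [v <-]; exists (GLval h^-1 *m v).
by rewrite conjgE !GL_MxE mulmxA qform_conj ?detV ?mul1r // -(GL_MxE h) mulgV.
Qed.

Lemma notin_SL_class t x y :
  represents t y -> ~ represents t x -> y \notin (x ^: SL)%g.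
Proof.
move=> rep_y nrep_x; apply/negP => /imsetP[h hSL y_def]; apply: nrep_x.
by rewrite -(conjgK h x) -y_def; apply: represents_conj; rewrite ?groupV.
Qed.
End SpecialLinearGroup.

Section UnipotentClasses.
Variable F : finFieldType.
Local Notation GL2 := {'GL_2[F]}.
Local Open Scope ring_scope.

Lemma umx_mx22 : umx F = mx22 1 1 0 1.
Proof. by rewrite [LHS]mx22E !mxE. Qed.

Lemma uGL_SL : uGL F \in SL F.
Proof. by rewrite inE /= umx_mx22 det_mx22 mulr1 mulr0 subr0. Qed.

Lemma qform_umx (v : 'cV[F]_2) : qform (umx F) v = - v 1 0 ^+ 2.
Proof. by rewrite /qform det_row_mx2 umx_mx22 !mulmx2E !mxE /=; ring. Qed.

Lemma uGL_not_represents t : (forall x : F, x ^+ 2 != - t) -> ~ represents t (uGL F).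
Proof.
move=> t_nonsq [v]; rewrite qform_umx => v_val.
by have := t_nonsq (v 1 0); rewrite -v_val opprK eqxx.
Qed.

Lemma mx22_unit (a b c d : F) : a * d - b * c != 0 -> mx22 a b c d \in unitmx.
Proof. by rewrite unitmxE det_mx22 unitfE. Qed.

Lemma lower_mx_unit (t : F) : mx22 1 0 t 1 \in unitmx.
Proof. by apply: mx22_unit; rewrite mulr1 mul0r subr0 oner_eq0. Qed.

Definition lowerGL (t : F) : GL2 := FinRing.Unit (lower_mx_unit t).

Lemma lowerGL_SL t : lowerGL t \in SL F.
Proof. by rewrite inE /= det_mx22 mulr1 mul0r subr0. Qed.

Lemma lowerGL_class t : t != 0 -> lowerGL t \in (uGL F ^: [set: GL2])%g.
Proof.
move=> t0; have g_unit : mx22 0 1 t 0 \in unitmx.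
  by apply: mx22_unit; rewrite mul0r mul1r sub0r oppr_eq0.
apply/imsetP; exists (FinRing.Unit g_unit); rewrite ?inE //.
apply: (mulgI (FinRing.Unit g_unit)); rewrite conjgE mulKVg.
by apply: val_inj; rewrite /= umx_mx22 -!mulmxE !mul_mx22; congr mx22; ring.
Qed.

Lemma lowerGL_represents t : represents t (lowerGL t).
Proof.
by exists (delta_mx 0 0); rewrite /qform det_row_mx2 !mulmx2E !mxE /=; ring.
Qed.

Lemma braid_u_lowerGL t : t * (t + 2%:R) != 0 ->
  (uGL F * lowerGL t * uGL F * lowerGL t != lowerGL t * uGL F * lowerGL t * uGL F)%g.
Proof.
move=> nz; apply: contraNneq nz => /(congr1 (fun z : GL2 => GLval z 0 0)).
rewrite !GL_MxE /= umx_mx22 !mul_mx22 !mxE /= => /eqP; rewrite -subr_eq0 => /eqP braid00.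
by apply/eqP; rewrite -braid00; ring.
Qed.
End UnipotentClasses.

Theorem mainTheorem11 (F : finFieldType) (hodd : odd #|F|) (hq : 3 < #|F|) :
  typeD ((uGL F) ^: [set: {'GL_2[F]}])%g.
Proof.
have [t [t_neq0 t_neqN2 t_nonsq]] := exists_class_parameter hodd hq.
apply: (typeD_of_classes (uGL_SL F) (lowerGL_SL t)).
- exact/imsetS/subsetT.
- by rewrite -(class_eqP (lowerGL_class t_neq0)); apply/imsetS/subsetT.
- exact: notin_SL_class (lowerGL_represents t) (uGL_not_represents t_nonsq).
- exact: braid_u_lowerGL (mulf_neq0 t_neq0 t_neqN2).
Qed.
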